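(* Let $p,q\in\mathbb N$ and $A\in\mathrm{Rec}_{p\times q}(\mathbb C)$. Then there exists a constant $C\ge0$ such that $|A[U,W]|\le C^{n+1}$ for all $n\in\mathbb N$ and all $(U,W)\in\mathcal M_{p\times q}^n$.
   Context: $\mathcal M_{p\times q}^n$ is the set of pairs $(U,W)$ of words of common length $n$ with $U\in\{0,\dots,p-1\}^n$, $W\in\{0,\dots,q-1\}^n$, and $\mathcal M_{p\times q}=\bigcup_n\mathcal M_{p\times q}^n$. For $A:\mathcal M_{p\times q}\to\mathbb C$ (values written $A[U,W]$) and $(S,T)\in\mathcal M_{p\times q}$, $(\rho(S,T)A)[U,W]=A[US,WT]$. $\mathrm{Rec}_{p\times q}(\mathbb C)$ is the set of $A$ such that the linear span of $\{\rho(S,T)A:(S,T)\in\mathcal M_{p\times q}\}$ is finite-dimensional. *)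

(* complex numbers are R[i] = complex R (mathcomp-real-closed)
   over an arbitrary R : realType (MathComp-Analysis), i.e. the field C. *)
From HB Require Import structures.
From mathcomp Require Import all_boot all_order all_algebra.
From mathcomp Require Import reals complex.
Set Implicit Arguments. Unset Strict Implicit. Unset Printing Implicit Defensive.
Import GRing.Theory Num.Theory.
Local Open Scope ring_scope.

Definition Mpq (p q : nat) : Type :=
  {x : seq 'I_p * seq 'I_q | size x.1 == size x.2}.

Definition mlen p q (x : Mpq p q) : nat := size (sval x).1.

Lemma cat_pair_size p q (x y : Mpq p q) :
  size ((sval x).1 ++ (sval y).1) == size ((sval x).2 ++ (sval y).2).
Proof.
case: x => [[u w] /= /eqP Hx]; case: y => [[s t] /= /eqP Hy].
by rewrite !size_cat Hx Hy.
Qed.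

Definition mcat p q (x y : Mpq p q) : Mpq p q :=
  exist _ ((sval x).1 ++ (sval y).1, (sval x).2 ++ (sval y).2)
        (cat_pair_size x y).

Definition rho p q (K : Type) (st : Mpq p q) (A : Mpq p q -> K) : Mpq p q -> K :=
  fun uw => A (mcat uw st).

(* Rec_{p x q}(C): the linear span of { rho(S,T) A } is finite-dimensional,
   i.e. it is contained in the span of finitely many functions B_0..B_{k-1}. *)
Definition Rec (R : realType) p q (A : Mpq p q -> R[i]) : Prop :=
  exists (k : nat) (B : 'I_k -> Mpq p q -> R[i]),
    forall st : Mpq p q, exists c : 'I_k -> R[i],
      forall uw : Mpq p q, rho st A uw = \sum_(j < k) c j * B j uw.

(** The shifts [rho s A] all lie in a finite-dimensional space, so finitely
    many of them, [rho (sw i) A], already span every shift: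
    [A (u s) = \sum_i lam_s i * A (u (sw i))].  Applying this with
    [s = x (sw i)] for a letter [x] expresses [A (u x (sw i))] through the
    [A (u (sw j))] with coefficients from a finite table, so these values grow
    at most geometrically in the length of [u]; the case of an empty [s]
    then bounds [A u] itself. *)

From mathcomp Require Import all_boot all_order all_algebra.
From mathcomp Require Import reals complex.
From mathcomp Require Import zify.
From Stdlib Require Import Classical_Prop.
Set Implicit Arguments. Unset Strict Implicit. Unset Printing Implicit Defensive.
Import Order.TTheory GRing.Theory Num.Theory.
Local Open Scope ring_scope.

Section Words.
Variables p q : nat.

Definition mnil : Mpq p q := exist _ ([::], [::]) isT.
Definition mletter (x : 'I_p) (y : 'I_q) : Mpq p q := exist _ ([:: x], [:: y]) isT.

Lemma Mpq_inj (u v : Mpq p q) : sval u = sval v -> u = v.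
Proof.
case: u => a Ha; case: v => b Hb /= E; subst b.
by rewrite (bool_irrelevance Ha Hb).
Qed.

Lemma mcatA (u v w : Mpq p q) : mcat (mcat u v) w = mcat u (mcat v w).
Proof. by apply: Mpq_inj => /=; rewrite !catA. Qed.

Lemma mnil_mcat (u : Mpq p q) : mcat mnil u = u.
Proof. by apply: Mpq_inj => /=; case: (sval u). Qed.

Lemma mcat_mnil (u : Mpq p q) : mcat u mnil = u.
Proof. by apply: Mpq_inj => /=; rewrite !cats0; case: (sval u). Qed.

Lemma mlen_mcat_letter (u : Mpq p q) x y :
  mlen (mcat u (mletter x y)) = (mlen u).+1.
Proof. by rewrite /mlen /= size_cat addn1. Qed.

Lemma Mpq_last_ind (P : Mpq p q -> Prop) :
  P mnil -> (forall u x y, P u -> P (mcat u (mletter x y))) -> forall u, P u.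
Proof.
move=> P0 PS [[a b] Hab]; elim/last_ind: a b Hab => [|a x IH] b Hab.
  suff -> : exist _ ([::], b) Hab = mnil by [].
  by apply: Mpq_inj; move: Hab => /= /eqP/esym/size0nil ->.
case/lastP: b Hab => [|b y] Hab; first by have := eqP Hab; rewrite /= size_rcons.
have Hab' : size (a, b).1 == size (a, b).2.
  by move: Hab; rewrite /= !size_rcons eqSS.
suff -> : exist _ (rcons a x, rcons b y) Hab = mcat (exist _ (a, b) Hab') (mletter x y).
  exact/PS/IH.
by apply: Mpq_inj; rewrite /= !cats1.
Qed.

End Words.

Definition shifts_spanned_by p q (K : pzRingType) (A : Mpq p q -> K)
    m (sw : 'I_m -> Mpq p q) :=
  forall s, exists lam : 'I_m -> K,
    forall uw, rho s A uw = \sum_i lam i * rho (sw i) A uw.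

Lemma exists_spanning_subseq (K : fieldType) (vT : vectType K) (P : vT -> Prop) :
  exists X : seq vT, (forall x, x \in X -> P x) /\ (forall v, P v -> v \in <<X>>%VS).
Proof.
pose N := \dim (fullv : {vspace vT}).
have dimX_le (X : seq vT) : (\dim <<X>> <= N)%N by apply: dimvS; apply: subvf.
have dim_cons (X : seq vT) v : v \notin <<X>>%VS -> (\dim <<X>> < \dim <<v :: X>>)%N.
  rewrite span_cons (ltn_leqif (dimv_leqif_eq (addvSr _ _))).
  by apply: contra => /eqP ->; apply: addvSl.
have spans_or_escapes (X : seq vT) :
    (forall v, P v -> v \in <<X>>%VS) \/ exists v, P v /\ v \notin <<X>>%VS.
  case: (classic (exists v, P v /\ v \notin <<X>>%VS)) => [|noesc]; first by right.
  by left=> v Pv; apply: contraT => vX; case: noesc; exists v.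
suff grow r X : (forall x, x \in X -> P x) -> (N - \dim <<X>> <= r)%N ->
    exists Y : seq vT, (forall x, x \in Y -> P x) /\ (forall v, P v -> v \in <<Y>>%VS).
  by apply: (grow N [::]) => //; rewrite leq_subr.
elim: r X => [|r IH] X XP dimX.
all: have [spans | [v [Pv vX]]] := spans_or_escapes X; first by exists X.
all: have := dim_cons X v vX; have := dimX_le (v :: X).
- by lia.
- move=> ? ?; apply: (IH (v :: X)); last by lia.
  by move=> x; rewrite inE => /predU1P [->|/XP].
Qed.

Section ShiftBasis.
Variables (K : fieldType) (p q k : nat) (A : Mpq p q -> K) (B : 'I_k -> Mpq p q -> K).
Hypothesis shifts_in_span : forall s, exists c : 'I_k -> K,
  forall uw, rho s A uw = \sum_j c j * B j uw.

Definition combB (v : 'rV[K]_k) uw := \sum_j v 0 j * B j uw.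

Lemma combB_sum n (a : 'I_n -> K) (x : 'I_n -> 'rV_k) uw :
  combB (\sum_i a i *: x i) uw = \sum_i a i * combB (x i) uw.
Proof.
rewrite /combB; under eq_bigr => j _ do rewrite summxE mulr_suml.
rewrite exchange_big; apply: eq_bigr => i _; rewrite mulr_sumr.
by apply: eq_bigr => j _; rewrite mxE mulrA.
Qed.

Lemma exists_shift_basis : exists m (sw : 'I_m -> Mpq p q), shifts_spanned_by A sw.
Proof.
pose realised v := exists s, forall uw, rho s A uw = combB v uw.
have [X [Xrealised Xspans]] := exists_spanning_subseq realised.
have [sw Hsw] := fin_all_exists
  (fun i : 'I_(size X) => Xrealised _ (mem_nth 0 (ltn_ord i))).
exists (size X), sw => s.
have [c Hc] := shifts_in_span s; pose v : 'rV_k := \row_j c j.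
have sv uw : rho s A uw = combB v uw.
  by rewrite Hc; apply: eq_bigr => j _; rewrite mxE.
have /Xspans vX : realised v by exists s.
exists (fun i => coord (in_tuple X) i v) => uw.
rewrite sv {1}(coord_span (X := in_tuple X) vX) combB_sum.
by apply: eq_bigr => i _; rewrite Hsw.
Qed.

End ShiftBasis.

Lemma ler_sum_term (R : numDomainType) (I : finType) (F : I -> R) i :
  (forall j, 0 <= F j) -> F i <= \sum_j F j.
Proof. by move=> F0; rewrite (bigD1 i) //= lerDl sumr_ge0. Qed.

Lemma norm_sum_mul_le (R : numDomainType) (I : finType) (c a : I -> R) M :
  (forall i, `|a i| <= M) -> `|\sum_i c i * a i| <= (\sum_i `|c i|) * M.
Proof.
move=> aM; apply: le_trans (ler_norm_sum _ _ _) _; rewrite mulr_suml.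
by apply: ler_sum => i _; rewrite normrM ler_wpM2l.
Qed.

Lemma shifts_spanned_exp_bound (K : numDomainType) p q (A : Mpq p q -> K)
    m (sw : 'I_m -> Mpq p q) :
  shifts_spanned_by A sw ->
  exists C : K, 0 <= C /\ forall uw, `|A uw| <= C ^+ (mlen uw).+1.
Proof.
move=> spanned.
have [lam Hlam] := fin_all_exists
  (fun t : 'I_p * 'I_q * 'I_m => spanned (mcat (mletter t.1.1 t.1.2) (sw t.2))).
have [lam0 Hlam0] := spanned (mnil p q).
pose G := \sum_t \sum_j `|lam t j|.
pose M := \sum_i `|A (sw i)|.
pose D := \sum_j `|lam0 j|.
have G0 : 0 <= G by apply: sumr_ge0 => t _; apply: sumr_ge0.
have M0 : 0 <= M by apply: sumr_ge0.
have D0 : 0 <= D by apply: sumr_ge0.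
have shift_bound u i : `|A (mcat u (sw i))| <= M * G ^+ mlen u.
  elim/Mpq_last_ind: u i => [|u x y IH] i.
    rewrite mnil_mcat /mlen /= expr0 mulr1.
    exact: (ler_sum_term (F := fun i => `|A (sw i)|)).
  rewrite mlen_mcat_letter mcatA; move: (Hlam (x, y, i) u); rewrite /rho => ->.
  apply: le_trans (norm_sum_mul_le _ IH) _.
  rewrite exprS mulrCA; apply: (ler_wpM2l M0); apply: (ler_wpM2r (exprn_ge0 _ G0)).
  by apply: (ler_sum_term (F := fun t => \sum_j `|lam t j|)) => t; apply: sumr_ge0.
exists (G + D * M); split=> [|uw]; first by rewrite addr_ge0 ?mulr_ge0.
move: (Hlam0 uw); rewrite /rho mcat_mnil => ->.
apply: le_trans (norm_sum_mul_le _ (shift_bound uw)) _.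
have DM0 : 0 <= D * M by rewrite mulr_ge0.
rewrite mulrA exprS; apply: ler_pM; rewrite ?exprn_ge0 ?ler_wpDl //.
by rewrite lerXn2r ?nnegrE ?addr_ge0 ?ler_wpDr.
Qed.

Theorem mainTheorem7 (R : realType) (p q : nat) (A : Mpq p q -> R[i]) :
  Rec A ->
  exists C : R[i], 0 <= C /\
    forall (n : nat) (uw : Mpq p q), mlen uw = n -> `|A uw| <= C ^+ n.+1.
Proof.
move=> [k [B shifts_in_span]].
have [m [sw spanned]] := exists_shift_basis shifts_in_span.
have [C [C0 boundC]] := shifts_spanned_exp_bound spanned.
by exists C; split=> // n uw <-.
Qed.
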